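(* Let $$C= \begin{pmatrix} -1& 2& 2\\ -2&1& 2\\ -2&2& 3 \end{pmatrix}.$$ For every positive integer $n$, writing $C^n(3,4,5)^\top=(x,y,z)^\top$, the circumradius of the triangle with side lengths $x,y,z$ is $R_n=2n^2+4n+\frac52$.
   Context: Triples are regarded as row vectors and $\top$ denotes transpose. The triple $C^n(3,4,5)^\top$ is a primitive Pythagorean triple (positive integers with $x^2+y^2=z^2$), so the triangle is a right triangle with hypotenuse $z$. *)

From HB Require Import structures.
From mathcomp Require Import all_boot all_order all_algebra.
Set Implicit Arguments. Unset Strict Implicit. Unset Printing Implicit Defensive.
Import Order.TTheory GRing.Theory Num.Theory.
Local Open Scope ring_scope.

Definition Cmat : 'M[int]_3 :=
  \matrix_(i < 3, j < 3)
    nth 0 (nth [::] [:: [:: -1; 2; 2]; [:: -2; 1; 2]; [:: -2; 2; 3]] i) j.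

Definition v345 : 'cV[int]_3 := \col_(i < 3) nth 0 [:: 3; 4; 5] i.

Definition Cn345 (n : nat) (k : nat) : int :=
  ((Cmat ^+ n) *m v345) (inord k) ord0.

(* Circumradius of a triangle with side lengths a, b, c:
   R = abc / (4 * Area), Area by Heron's formula, i.e.
   R = abc / sqrt((a+b+c)(-a+b+c)(a-b+c)(a+b-c)). *)
Definition circumradius (R : rcfType) (a b c : R) : R :=
  a * b * c / Num.sqrt ((a + b + c) * (- a + b + c) * (a - b + c) * (a + b - c)).

(** C maps the Euclid triple (k^2 - 1, 2k, k^2 + 1) to the one with parameter
    k + 2, and (3,4,5) is the triple with k = 2; so C^n (3,4,5)^T is the triple
    with k = 2n + 2.  It is a right triangle, whose circumradius is half its
    hypotenuse, (k^2 + 1)/2 = 2n^2 + 4n + 5/2. *)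
From HB Require Import structures.
From mathcomp Require Import all_boot all_order all_algebra.
From mathcomp Require Import ring zify.
Import Order.TTheory GRing.Theory Num.Theory.
Local Open Scope ring_scope.

Lemma circumradius_right (R : rcfType) (a b c : R) :
  0 < a -> 0 < b -> a ^+ 2 + b ^+ 2 = c ^+ 2 -> circumradius a b c = c / 2.
Proof.
move=> a_gt0 b_gt0 pyth.
have heron : (a + b + c) * (- a + b + c) * (a - b + c) * (a + b - c)
             = (2 * a * b) ^+ 2.
  have -> : (a + b + c) * (- a + b + c) * (a - b + c) * (a + b - c)
            = 2 * (a ^+ 2 * b ^+ 2 + (a ^+ 2 + b ^+ 2) * c ^+ 2)
              - (a ^+ 4 + b ^+ 4 + (c ^+ 2) ^+ 2) by ring.
  by rewrite -pyth; ring.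
rewrite /circumradius heron sqrtr_sqr ger0_norm; last by rewrite !mulr_ge0 ?ltW.
by field; rewrite !lt0r_neq0.
Qed.

Lemma circumradius_euclid (R : rcfType) (k : R) :
  1 < k -> circumradius (k ^+ 2 - 1) (2 * k) (k ^+ 2 + 1) = (k ^+ 2 + 1) / 2.
Proof.
move=> k_gt1; apply: circumradius_right; last by ring.
- by rewrite subr_gt0 -[X in X < _](expr1n _ 2) ltrXn2r // ltW.
- by rewrite mulr_gt0 // (lt_trans ltr01).
Qed.

Definition euclid_triple (k : int) : 'cV[int]_3 :=
  \col_(i < 3) nth 0 [:: k ^+ 2 - 1; 2 * k; k ^+ 2 + 1] i.

Lemma v345_euclid : v345 = euclid_triple 2.
Proof. by apply/matrixP => i j; rewrite !mxE; case: i => [[|[|[|]]] ?]. Qed.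

Lemma Cmat_euclid (k : int) : Cmat *m euclid_triple k = euclid_triple (k + 2).
Proof.
apply/matrixP => i j; rewrite !mxE !big_ord_recl big_ord0 !mxE /=.
by case: i => [[|[|[|]]] ?] //=; ring.
Qed.

Lemma Cmat_pow_v345 (n : nat) : Cmat ^+ n *m v345 = euclid_triple (2 * n%:Z + 2).
Proof.
elim: n => [|n IH]; first by rewrite expr0 mul1mx v345_euclid.
rewrite exprS -mulmxA IH Cmat_euclid; congr euclid_triple.
by rewrite -[n.+1]addn1 PoszD; ring.
Qed.

Theorem mainTheorem9 (R : rcfType) (n : nat) (hn : (0 < n)%N) :
  circumradius ((Cn345 n 0)%:~R : R) (Cn345 n 1)%:~R (Cn345 n 2)%:~R
  = 2 * (n%:R) ^+ 2 + 4 * n%:R + 5 / 2.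
Proof.
rewrite /Cn345 Cmat_pow_v345 !mxE !inordK //=.
set k := 2 * n%:Z + 2.
have k_gt1 : 1 < (k%:~R : R) by rewrite ltr1z /k; lia.
rewrite intrB !intrD intrM !rmorphXn /= circumradius_euclid //.
by rewrite /k intrD intrM; field.
Qed.
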